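(* Let $n\ge 2$. A $(2n-2)\times(2n-2)$ lower triangular matrix $F=(F_{i,j})_{0\le i,j\le 2n-3}$ is the $\mathbf{F}$-matrix of some fully heterochronous ranked tree shape with $n$ leaves if and only if its entries $F_{i,j}$, $0\le j\le i\le 2n-3$, form an $(n,2n-3,2n-3)$ $\mathbf{F}$-sequence.
   Context: A fully heterochronous ranked tree shape with $n$ leaves is a rooted full binary tree (every node has out-degree $0$ or $2$), without leaf labels, with $n$ leaves, together with a total ordering of all $2n-1$ nodes (leaves included) such that nodes appear in increasing order along every path from the root to a leaf; the position of a node in this order, numbered $0,\dots,2n-2$, is its rank. Its $\mathbf{F}$-matrix is the $(2n-2)\times(2n-2)$ lower triangular matrix $F$, indices from $0$ to $2n-3$, where for $0\le j\le i$ the entry $F_{i,j}$ is the number of edges from a parent node $v$ to a child node $w$ with rank of $v$ at most $j$ and rank of $w$ larger than $i$. For a doubly indexed sequence $f$, with the convention $f_{k,\ell}=0$ whenever $k$ or $\ell$ is negative, define $L_f(i,j):=\max(f_{i,j-1}, f_{i-1,j}-1, f_{i,j-1}+f_{i-1,j}-f_{i-1,j-1}-1)$ and $U_f(i,j):=\min(f_{i-1,j}, f_{i,j-1}+f_{i-1,j}-f_{i-1,j-1})$. For non-negative integers $M\le N\le 2n-3$, with $B=\max(N-1,M)$, an $(n,N,M)$ $\mathbf{F}$-sequence is a doubly indexed sequence $f_{i,j}$ of non-negative integers defined exactly for the valid indices $(i,j)\in\{(i,j):0\le j\le i\le N-1\}\cup\{(N,j):0\le j\le M\}$ such that: (1)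 $f_{i,i}$ ($0\le i\le B$) are positive integers with $f_{0,0}=2$, $f_{i,i}=f_{i-1,i-1}\pm1$ for $1\le i\le B$, and $f_{i,i}\le 2n-i-2$ for $0\le i\le B$; (2) $L_f(i,j)\le f_{i,j}\le U_f(i,j)$ for valid $(i,j)$ with $0\le j\le i-2$; (3) for valid $(i,j)$ with $0\le j\le i-1$, if $f_{i-1,j}=f_{i-1,i-1}$ then $f_{i,j}=f_{i-1,i-1}-1$. *)

From HB Require Import structures.
From mathcomp Require Import all_boot all_order all_algebra.
Set Implicit Arguments. Unset Strict Implicit. Unset Printing Implicit Defensive.
Import Order.TTheory GRing.Theory Num.Theory.

(* Nodes are identified with their ranks 0, ..., 2n-2 (rank 0 = root). *)
(* The tree is encoded by its parent function p: for each non-root     *)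
(* node w (1 <= w <= 2n-2), p w is the rank of its parent.  Values of  *)
(* p outside 1..2n-2 are irrelevant.                                   *)

Definition nchildren (n : nat) (p : nat -> nat) (v : nat) : nat :=
  count (fun w => p w == v) (iota 1 (2 * n - 2)).

Definition is_ranked_tree_shape (n : nat) (p : nat -> nat) : Prop :=
  (forall w, 1 <= w <= 2 * n - 2 -> p w < w)%N /\
  (forall v, v <= 2 * n - 2 -> nchildren n p v = 0 \/ nchildren n p v = 2)%N /\
  count (fun v => nchildren n p v == 0%N) (iota 0 (2 * n - 1)) = n.

(* F-matrix: F_{i,j} = #{edges (v,w) : rank v <= j, rank w > i} for j <= i,
   and 0 above the diagonal (lower triangular). *)
Definition Fmatrix (n : nat) (p : nat -> nat) : 'M[int]_(2 * n - 2) :=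
  \matrix_(i, j) if (j <= i)%N then
                   Posz (count (fun w => (i < w)%N && (p w <= j)%N) (iota 1 (2 * n - 2)))
                 else 0.

Local Open Scope ring_scope.

Definition fz (f : nat -> nat -> int) (i j : int) : int :=
  if (i < 0) || (j < 0) then 0 else f `|i|%N `|j|%N.

Definition Lf (f : nat -> nat -> int) (i j : int) : int :=
  Num.max (fz f i (j - 1))
    (Num.max (fz f (i - 1) j - 1)
             (fz f i (j - 1) + fz f (i - 1) j - fz f (i - 1) (j - 1) - 1)).

Definition Uf (f : nat -> nat -> int) (i j : int) : int :=
  Num.min (fz f (i - 1) j) (fz f i (j - 1) + fz f (i - 1) j - fz f (i - 1) (j - 1)).

Definition valid_idx (N M i j : nat) : bool :=
  ((j <= i)%N && (i < N)%N) || ((i == N) && (j <= M)%N).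

Definition Fsequence (n N M : nat) (f : nat -> nat -> int) : Prop :=
  let B := maxn N.-1 M in
  (M <= N <= 2 * n - 3)%N /\
  (forall i j, valid_idx N M i j -> 0 <= f i j) /\
  (* (1) *)
  (forall i, (i <= B)%N -> 0 < f i i) /\
  f 0%N 0%N = 2 /\
  (forall i, (1 <= i <= B)%N ->
      f i i = f i.-1 i.-1 + 1 \/ f i i = f i.-1 i.-1 - 1) /\
  (forall i, (i <= B)%N -> f i i <= (2 * n)%:Z - i%:Z - 2) /\
  (* (2) *)
  (forall i j, valid_idx N M i j -> (j + 2 <= i)%N ->
      Lf f i j <= f i j <= Uf f i j) /\
  (* (3) *)
  (forall i j, valid_idx N M i j -> (j + 1 <= i)%N ->
      f i.-1 j = f i.-1 i.-1 -> f i j = f i.-1 i.-1 - 1).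

Definition mx_seq (m : nat) (F : 'M[int]_m) (i j : nat) : int :=
  oapp (fun i' : 'I_m => oapp (fun j' : 'I_m => F i' j') 0 (insub j)) 0 (insub i).

Definition lower_triangular (m : nat) (F : 'M[int]_m) : Prop :=
  forall i j : 'I_m, (i < j)%N -> F i j = 0.

From mathcomp Require Import all_boot all_order all_algebra zify.

Import Order.TTheory GRing.Theory Num.Theory.

(* Encode a ranked tree shape by its parent map p on the non-root ranks 1, ..., 2n-2.
   Then F_{i,j} counts the nodes w > i with p w <= j, so consecutive rows differ by an
   indicator, F_{i,j} - F_{i+1,j} = [p (i+1) <= j], while on the diagonal
   F_{v,v} - F_{v,v-1} is the number of children of v.  The first identity gives the
   window inequalities (2) and the plateau rule (3); the second turns the +-1 rule (1)
   into binarity, and binarity together with the 2n-2 edges gives n leaves.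
   Conversely, (1)-(3) force each row difference f_{i,.} - f_{i+1,.} to be a
   nondecreasing 0/1 function on 0..i that equals 1 at i; its jump point is a parent
   p (i+1) <= i, and f is the F-matrix of p by downward induction on i, starting from
   the zero row 2n-2 just below the matrix. *)

Section ParentMap.

Variables (K : nat) (p : nat -> nat).

Definition Fentry (i j : nat) : nat :=
  count (fun w => (i < w) && (p w <= j)) (iota 1 K).

Local Notation children v := (count (fun w => p w == v) (iota 1 K)).

Lemma Fentry_top i j : K <= i -> Fentry i j = 0.
Proof.
move=> Ki; apply/eqP; rewrite eqn0Ngt -has_count; apply/hasPn => w.
by rewrite mem_iota; lia.
Qed.

Lemma Fentry_iota i j : i <= K -> Fentry i j = count (fun w => p w <= j) (iota i.+1 (K - i)).
Proof.
move=> iK; rewrite /Fentry -{1}(subnKC iK) iotaD count_cat add1n.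
have -> : count (fun w => (i < w) && (p w <= j)) (iota 1 i) = 0.
  by apply/eqP; rewrite eqn0Ngt -has_count; apply/hasPn => w; rewrite mem_iota; lia.
by apply: eq_in_count => w; rewrite mem_iota => /andP[-> _].
Qed.

Lemma Fentry_succ_row i j : i < K -> Fentry i j = Fentry i.+1 j + (p i.+1 <= j).
Proof.
by move=> iK; rewrite !Fentry_iota ?(ltnW iK) // -[K - i]subSS subSn //= addnC.
Qed.

Lemma Fentry_mono i j j' : j <= j' -> Fentry i j <= Fentry i j'.
Proof. by move=> jj'; apply: sub_count => w /andP[-> /leq_trans ->]. Qed.

Lemma Fentry_le i j : Fentry i j <= K - i.
Proof.
case: (leqP K i) => [/Fentry_top -> //| /ltnW iK].
by rewrite Fentry_iota // (leq_trans (count_size _ _)) ?size_iota.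
Qed.

Lemma Fentry_succ_col i j :
  Fentry i j.+1 = Fentry i j + count (fun w => (i < w) && (p w == j.+1)) (iota 1 K).
Proof.
rewrite /Fentry -count_predUI (@eq_count _ (predI _ _) pred0) ?count_pred0 ?addn0 => [|w /=].
  by apply: eq_count => w /=; rewrite [p w <= j.+1]leq_eqVlt ltnS andb_orr orbC.
by case: (p w =P j.+1) => [->|]; rewrite ?ltnn ?andbF.
Qed.

Lemma Fentry_col0 i : Fentry i 0 = count (fun w => (i < w) && (p w == 0)) (iota 1 K).
Proof. by apply: eq_count => w; rewrite leqn0. Qed.

Lemma sum_count_parent (s : seq nat) m :
  \sum_(v <- iota 0 m) count (fun w => p w == v) s = count (fun w => p w < m) s.
Proof.
elim: s => [|w s IH] /=; first by rewrite big1.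
rewrite big_split /= IH; congr (_ + _).
transitivity (count_mem (p w) (iota 0 m)).
  by rewrite -sum1_count [RHS]big_mkcond; apply: eq_bigr => v _ /=; rewrite eq_sym.
by rewrite count_uniq_mem ?iota_uniq // mem_iota.
Qed.

Hypothesis parent_lt : forall w, 0 < w <= K -> p w < w.

Lemma count_children_above v : count (fun w => (v < w) && (p w == v)) (iota 1 K) = children v.
Proof.
apply: eq_in_count => w; rewrite mem_iota => /andP[w1 wK]; have := parent_lt w.
by case: eqP => [->|_]; rewrite ?andbF ?andbT //; apply; lia.
Qed.

Lemma Fentry_diag0 : Fentry 0 0 = children 0.
Proof. by rewrite Fentry_col0 count_children_above. Qed.

Lemma Fentry_diag_succ v : Fentry v.+1 v.+1 = Fentry v.+1 v + children v.+1.
Proof. by rewrite Fentry_succ_col count_children_above. Qed.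

Lemma Fentry_diag_subdiag i : i < K -> Fentry i i = (Fentry i.+1 i).+1.
Proof.
move=> iK; rewrite Fentry_succ_row //.
by have := parent_lt i.+1; case: leqP; lia.
Qed.

Lemma sum_children : \sum_(v <- iota 0 K.+1) children v = K.
Proof.
rewrite sum_count_parent (@eq_in_count _ _ predT) ?count_predT ?size_iota // => w.
by rewrite mem_iota /= => wK; have := parent_lt w; lia.
Qed.

Lemma count_leaves :
    (forall v, v <= K -> children v = 0 \/ children v = 2) ->
  count (fun v : nat => children v == 0) (iota 0 K.+1) * 2 = K + 2.
Proof.
move=> binary.
have internal : count (predC (fun v : nat => children v == 0)) (iota 0 K.+1) * 2 = K.
  rewrite -[RHS]sum_children -sum1_count big_distrl big_mkcond !big_seq.
  apply: eq_bigr => v; rewrite mem_iota => hv /=.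
  by have /binary[->|->] : v <= K by lia.
by have := count_predC (fun v : nat => children v == 0) (iota 0 K.+1); rewrite size_iota; lia.
Qed.

End ParentMap.

Local Open Scope ring_scope.

Lemma find_threshold (d : nat -> int) m :
    (forall j, (j <= m)%N -> 0 <= d j <= 1) -> (forall j, (j < m)%N -> d j <= d j.+1) ->
    d m = 1 ->
  forall j, (j <= m)%N -> d j = (find (fun k => d k == 1) (iota 0 m.+1) <= j)%N.
Proof.
move=> d01 d_mono dm1.
have has1 : has (fun k => d k == 1) (iota 0 m.+1).
  by apply/hasP; exists m; rewrite ?dm1 // mem_iota ltnS leqnn.
set q := find _ _.
have qm : (q <= m)%N by rewrite -ltnS -[m.+1](size_iota 0) -has_find.
have dq : d q = 1 by have := nth_find 0%N has1; rewrite nth_iota // => /eqP.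
have d_up k : (q + k <= m)%N -> d (q + k)%N = 1.
  elim: k => [|k IH]; first by rewrite addn0.
  rewrite addnS => hk; have := d_mono _ hk; have := d01 _ hk.
  by rewrite IH ?(ltnW hk); lia.
move=> j jm; case: (leqP q j) => [qj | jq].
  by rewrite -(subnKC qj) d_up ?subnKC.
have := before_find 0%N jq; rewrite nth_iota ?add0n => [/eqP|]; last lia.
by have := d01 j jm; lia.
Qed.

Lemma Lf_Uf_bounds0 (f : nat -> nat -> int) i :
  (Lf f i.+1 0%N <= f i.+1 0%N <= Uf f i.+1 0%N) =
  (0 <= f i.+1 0%N) && (0 <= f i 0%N - f i.+1 0%N <= 1).
Proof.
by rewrite /Lf /Uf /fz /= !subn1 /= !ge_max !le_min; apply/idP/idP; lia.
Qed.

Lemma Lf_Uf_boundsS (f : nat -> nat -> int) i j :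
  (Lf f i.+1 j.+1 <= f i.+1 j.+1 <= Uf f i.+1 j.+1) =
  [&& f i.+1 j <= f i.+1 j.+1, 0 <= f i j.+1 - f i.+1 j.+1 <= 1
    & f i j - f i.+1 j <= f i j.+1 - f i.+1 j.+1 <= f i j - f i.+1 j + 1].
Proof.
by rewrite /Lf /Uf /fz /= !subn1 /= !ge_max !le_min; apply/idP/idP; lia.
Qed.

Lemma mx_seq_ord m (F : 'M[int]_m) (i j : 'I_m) : mx_seq F i j = F i j.
Proof. by rewrite /mx_seq !valK. Qed.

Lemma mx_seq_out m (F : 'M[int]_m) i j : (m <= i)%N -> mx_seq F i j = 0.
Proof.
by rewrite leqNgt => /negbTE im; rewrite /mx_seq (@insubF _ (fun k => k < m)%N _ i im).
Qed.

Lemma mx_seq_Fmatrix n p i j :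
  (j <= i)%N -> mx_seq (Fmatrix n p) i j = Fentry (2 * n - 2) p i j.
Proof.
move=> ji; case: (ltnP i (2 * n - 2)) => iK; last by rewrite mx_seq_out // Fentry_top.
have jK := leq_ltn_trans ji iK.
by rewrite -[i]/(val (Ordinal iK)) -[j]/(val (Ordinal jK)) mx_seq_ord mxE /= ji.
Qed.

Lemma maxn_pred N : maxn N.-1 N = N.
Proof. exact/maxn_idPr/leq_pred. Qed.

Lemma valid_idx_square N i j : valid_idx N N i j = (j <= i <= N)%N.
Proof. by rewrite /valid_idx; apply/idP/idP; lia. Qed.

Lemma Fsequence_Fmatrix n p : (1 < n)%N -> is_ranked_tree_shape n p ->
  Fsequence n (2 * n - 3) (2 * n - 3) (mx_seq (Fmatrix n p)).
Proof.
move=> n_gt1 [parent_lt [binary _]].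
have fE i j : (j <= i)%N -> mx_seq (Fmatrix n p) i j = Fentry (2 * n - 2) p i j.
  exact: mx_seq_Fmatrix.
have row i j : (i < 2 * n - 2)%N ->
    Fentry (2 * n - 2) p i j = (Fentry (2 * n - 2) p i.+1 j + (p i.+1 <= j))%N.
  exact: Fentry_succ_row.
have diag i : (i < 2 * n - 2)%N ->
    Fentry (2 * n - 2) p i i = (Fentry (2 * n - 2) p i.+1 i).+1.
  exact: Fentry_diag_subdiag.
rewrite /Fsequence maxn_pred; split; first lia.
split; first by move=> i j; rewrite valid_idx_square => /andP[ji _]; rewrite fE.
split; first by move=> i iN; rewrite fE // diag //; lia.
split.
  have := binary 0%N isT; rewrite /nchildren -Fentry_diag0 // fE // diag //; lia.
split.
  move=> [|i] // /andP[_ iN]; rewrite !fE //= Fentry_diag_succ // diag; last lia.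
  have := binary i.+1; rewrite /nchildren; lia.
split; first by move=> i iN; rewrite fE //; have := Fentry_le (2 * n - 2) p i i; lia.
split.
  move=> i j; rewrite valid_idx_square => /andP[_ iN] ji.
  case: i iN ji => [|i] iN ji; first lia.
  have iK : (i < 2 * n - 2)%N by lia.
  case: j ji => [|j] ji.
    by rewrite Lf_Uf_bounds0 !fE // (row i 0%N iK); lia.
  have := Fentry_mono (2 * n - 2) p i.+1 _ _ (leqnSn j).
  rewrite Lf_Uf_boundsS !fE; [|lia..].
  by rewrite (row i j iK) (row i j.+1 iK); lia.
move=> i j; rewrite valid_idx_square => /andP[_ iN] ji.
case: i iN ji => [|i] iN ji /=; first lia.
have [iK ji'] : (i < 2 * n - 2)%N /\ (j <= i)%N by lia.
have := Fentry_mono (2 * n - 2) p i.+1 _ _ ji'; have := parent_lt i.+1.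
rewrite !fE; [|lia..].
by rewrite (row i j iK) (diag i iK); lia.
Qed.

Definition parent_of (f : nat -> nat -> int) (w : nat) : nat :=
  find (fun j => f w.-1 j - f w j == 1) (iota 0 w).

Section ParentOfFsequence.

Variables (n : nat) (f : nat -> nat -> int).
Local Notation N := (2 * n - 3)%N.
Local Notation K := (2 * n - 2)%N.
Hypotheses (n_gt1 : (1 < n)%N) (f_seq : Fsequence n N N f) (f_K : forall j, f K j = 0).

Lemma f_ge0 i j : (j <= i <= N)%N -> 0 <= f i j.
Proof. by case: f_seq => _ [f_ge0 _] ij; apply: f_ge0; rewrite valid_idx_square. Qed.

Lemma f_diag_gt0 i : (i <= N)%N -> 0 < f i i.
Proof. by case: f_seq => _ [_ [f_gt0 _]] iN; apply: f_gt0; rewrite maxn_pred. Qed.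

Lemma f00 : f 0%N 0%N = 2.
Proof. by case: f_seq => _ [_ [_ []]]. Qed.

Lemma f_diag_step i : (i < N)%N -> f i.+1 i.+1 = f i i + 1 \/ f i.+1 i.+1 = f i i - 1.
Proof. by case: f_seq => _ [_ [_ [_ [step _]]]] iN; apply: step; rewrite maxn_pred. Qed.

Lemma f_diag_le i : (i <= N)%N -> f i i <= (2 * n)%:Z - i%:Z - 2.
Proof. by case: f_seq => _ [_ [_ [_ [_ [le _]]]]] iN; apply: le; rewrite maxn_pred. Qed.

Lemma f_window i j : (j + 2 <= i <= N)%N -> Lf f i j <= f i j <= Uf f i j.
Proof.
case: f_seq => _ [_ [_ [_ [_ [_ [window _]]]]]] /andP[ji iN].
by apply: window => //; rewrite valid_idx_square iN andbT (leq_trans _ ji) ?leq_addr.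
Qed.

Lemma f_plateau i j : (j <= i < N)%N -> f i j = f i i -> f i.+1 j = f i i - 1.
Proof.
case: f_seq => _ [_ [_ [_ [_ [_ [_ plateau]]]]]] /andP[ji iN].
by apply: (plateau i.+1 j); rewrite ?valid_idx_square ?addn1 ?ltnS ?(leqW ji).
Qed.

Lemma f_subdiag i : (i < N)%N -> f i.+1 i = f i i - 1.
Proof. by move=> iN; apply: f_plateau; rewrite ?leqnn. Qed.

Lemma f_last_diag : f N N = 1.
Proof. by have := f_diag_gt0 N (leqnn N); have := f_diag_le N (leqnn N); lia. Qed.

Lemma rowstep_01 i j : (j < i < N)%N -> 0 <= f i j - f i.+1 j <= 1.
Proof.
move=> /andP[ji iN]; have := @f_window i.+1 j; rewrite iN andbT addn2 ltnS.
case: j ji => [|j] ji; first by rewrite Lf_Uf_bounds0 => /(_ ji) /andP[].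
by rewrite Lf_Uf_boundsS => /(_ ji) /and3P[].
Qed.

Lemma rowstep_mono i j : (j.+1 < i < N)%N -> f i j - f i.+1 j <= f i j.+1 - f i.+1 j.+1.
Proof.
move=> /andP[ji iN]; have := @f_window i.+1 j.+1; rewrite iN andbT addn2 ltnS Lf_Uf_boundsS.
by case/(_ ji)/and3P => _ _ /andP[].
Qed.

Lemma row_mono i j : (j < i <= N)%N -> f i j <= f i j.+1.
Proof.
case: i => [|i] /andP[ji iN] //; case: (ltngtP j.+1 i) => [lt_ji | lt_ij | ij].
- have := @f_window i.+1 j.+1; rewrite iN andbT addn2 ltnS Lf_Uf_boundsS.
  by case/(_ lt_ji)/and3P.
- have -> : j = i by lia.
  by have := f_subdiag i iN; have := f_diag_step i iN; lia.
- subst i; have sub0 := f_subdiag j (ltnW iN); have sub1 := f_subdiag j.+1 iN.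
  case: (f_diag_step j (ltnW iN)) => [up | down].
    by have := rowstep_01 j.+1 j; rewrite ltnSn iN => /(_ isT); lia.
  by rewrite f_plateau ?leqnSn //; lia.
Qed.

Lemma row_le_diag i j : (j <= i <= N)%N -> f i j <= f i i.
Proof.
move=> /andP[ji iN]; rewrite -(subKn ji).
elim: (i - j)%N (leq_subr j i) => [|k IH] ki; first by rewrite subn0.
apply: le_trans (IH (ltnW ki)).
have -> : (i - k = (i - k.+1).+1)%N by lia.
by apply: row_mono; lia.
Qed.

Lemma rowstep_step i : (i <= N)%N ->
  [/\ forall j, (j <= i)%N -> 0 <= f i j - f i.+1 j <= 1,
      forall j, (j < i)%N -> f i j - f i.+1 j <= f i j.+1 - f i.+1 j.+1
    & f i i - f i.+1 i = 1].
Proof.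
rewrite leq_eqVlt => /orP[/eqP -> | iN].
  (* Row N+1 is the zero row, so the step is row N itself, squeezed in [0, f N N] = [0, 1]. *)
  have -> : N.+1 = K by lia.
  split=> [j jN | j jN |]; rewrite ?f_K ?subr0 ?f_last_diag //.
    by have := f_ge0 N j; have := row_le_diag N j; rewrite f_last_diag jN leqnn; lia.
  by apply: row_mono; rewrite jN leqnn.
have sub := f_subdiag i iN.
split=> [j | j ji |]; last by lia.
  rewrite leq_eqVlt => /orP[/eqP -> | ji]; first by lia.
  by apply: rowstep_01; rewrite ji iN.
case: (ltngtP j.+1 i) => [lt_ji | | ij]; [ | lia | ].
  by apply: rowstep_mono; rewrite lt_ji iN.
by subst i; have := rowstep_01 j.+1 j; rewrite ltnSn iN => /(_ isT); lia.
Qed.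

Lemma rowstep_indicator i j : (j <= i <= N)%N ->
  f i j - f i.+1 j = (parent_of f i.+1 <= j)%N.
Proof.
move=> /andP[ji iN]; have [step01 step_mono step_top] := rowstep_step i iN.
exact: (find_threshold (fun j => f i j - f i.+1 j) i step01 step_mono step_top).
Qed.

Lemma parent_of_lt w : (0 < w <= K)%N -> (parent_of f w < w)%N.
Proof.
case: w => [|w] // wK; have wN : (w <= N)%N by lia.
have [_ _ top] := rowstep_step w wN.
by have := rowstep_indicator w w; rewrite leqnn wN top => /(_ isT); lia.
Qed.

Lemma Fentry_parent_of i j : (j <= i <= K)%N -> Fentry K (parent_of f) i j = f i j :> int.
Proof.
move=> /andP[+ iK]; rewrite -(subKn iK).
elim: (K - i)%N (leq_subr i K) j => [|k IH] kK j ji.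
  by rewrite subn0 Fentry_top // f_K.
have e : (K - k = (K - k.+1).+1)%N by lia.
rewrite Fentry_succ_row; last lia.
rewrite PoszD -e IH; [|lia..].
by have := rowstep_indicator (K - k.+1) j; rewrite -e; lia.
Qed.

Lemma nchildren_parent_of v : (v <= K)%N ->
  nchildren n (parent_of f) v = 0%N \/ nchildren n (parent_of f) v = 2%N.
Proof.
case: v => [_ | v vK].
  have := Fentry_diag0 _ _ parent_of_lt; have := Fentry_parent_of 0 0 (leq0n K).
  by rewrite f00 /nchildren; lia.
have := Fentry_diag_succ _ _ parent_of_lt v; rewrite /nchildren.
have := Fentry_parent_of v.+1 v.+1; have := Fentry_parent_of v.+1 v; rewrite vK leqnSn leqnn.
case: (ltngtP v.+1 K) => [vK' | Kv | ->]; [ | lia | by rewrite !f_K; lia].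
have vN : (v < N)%N by lia.
by have := f_subdiag v vN; have := f_diag_step v vN; lia.
Qed.

Lemma tree_parent_of : is_ranked_tree_shape n (parent_of f).
Proof.
split; first exact: parent_of_lt.
split; first exact: nchildren_parent_of.
have := count_leaves _ _ parent_of_lt nchildren_parent_of.
by rewrite /nchildren (_ : 2 * n - 1 = K.+1)%N; lia.
Qed.

End ParentOfFsequence.

Theorem corollary2 (n : nat) (hn : (2 <= n)%N) (F : 'M[int]_(2 * n - 2))
  (hF : lower_triangular F) :
  (exists p : nat -> nat, is_ranked_tree_shape n p /\ F = Fmatrix n p) <->
  Fsequence n (2 * n - 3) (2 * n - 3) (mx_seq F).
Proof.
split=> [[p [tree ->]] | F_seq]; first exact: Fsequence_Fmatrix.
have F_K j : mx_seq F (2 * n - 2) j = 0 by apply: mx_seq_out.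
exists (parent_of (mx_seq F)); split; first exact: tree_parent_of.
apply/matrixP => i j; rewrite mxE; case: leqP => [ji | /hF //].
by rewrite -mx_seq_ord Fentry_parent_of // ji ltnW.
Qed.
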